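(* For every $n\ge2$, the total number of edges, summed over all plane trees $T$ on $n$ vertices and all leaves $\ell$ of $T$, of the path from the root to $\ell$ equals $4^{n-2}$. The total number of leaves over all plane trees on $n$ vertices is $\frac12\binom{2n-2}{n-1}$. Consequently, the expected length of the root-to-leaf path, for a uniformly random pair (plane tree on $n$ vertices, leaf of it), is $$\frac{(2n-2)!!}{2\,(2n-3)!!}=\frac{\sqrt{\pi n}}{2}+O\Bigl(\frac1{\sqrt n}\Bigr).$$
   Context: General (plane) trees are rooted trees in which every vertex may have any number of children and the children of each vertex are linearly ordered. The size of a tree is its number of vertices, and a leaf is a vertex with no children. The double factorials are $(2m)!!=2\cdot4\cdots(2m)$ and $(2m-1)!!=1\cdot3\cdots(2m-1)$, with $0!!=1$. *)

From Stdlib Require Import Reals List.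
From mathcomp Require Import all_boot.

Inductive ptree : Type := Node : seq ptree -> ptree.

Fixpoint tsize (t : ptree) : nat :=
  match t with Node ts => (sumn (map tsize ts)).+1 end.

Fixpoint leaf_depths (t : ptree) : seq nat :=
  match t with
  | Node [::] => [:: 0]
  | Node ts => map S (flatten (map leaf_depths ts))
  end.

Definition nleaves (t : ptree) : nat := size (leaf_depths t).

Definition leaf_path_total (t : ptree) : nat := sumn (leaf_depths t).

Definition enum_trees (n : nat) (s : seq ptree) : Prop :=
  List.NoDup s /\ forall t, List.In t s <-> tsize t = n.

Fixpoint dfact (k : nat) : nat :=
  match k with
  | 0 => 1
  | 1 => 1
  | (k'.+1).+1 as k2 => k2 * dfact k'
  end.

(* Every r-tuple of forests with m vertices in total either begins with the
   empty forest or is obtained, by grafting, from a unique (r+1)-tuple with m-1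
   vertices: delete the root of its first tree and put that root's subtrees in
   front.  Summed over all such tuples, the leaves and the leaf depths of a
   fixed component thus satisfy Pascal-type recurrences in (m, r), solved by
   C(2m+r-2, m-1) and by partial row sums of Pascal's triangle.  For r = 1 this
   gives C(2n-3, n-2) leaves and a depth total of sum_(j <= n-2) C(2n-3, j) =
   2^(2n-4) over the plane trees on n vertices.  Their quotient is the Wallis
   ratio (2n-2)!!/(2 (2n-3)!!), whose square is squeezed between pi(n-1)/4 and
   pi(n-1/2)/4 by comparing consecutive Wallis integrals of sin^k on [0, pi/2]. *)

From Pilot Require Import Defs.
From Stdlib Require Import Reals List Permutation Lra Lia.
From Coquelicot Require Import Coquelicot.
From mathcomp Require Import all_boot zify.

Set Implicit Arguments.
Unset Strict Implicit.
Close Scope R_scope.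
Open Scope seq_scope.

Lemma sumn_Permutation (A : Type) (F : A -> nat) (l l' : seq A) :
  Permutation l l' -> sumn (map F l) = sumn (map F l').
Proof. by elim=> //= [x s s' _ -> | x y s | s s' s'' _ -> _ ->]; lia. Qed.

Lemma eq_in_sumn_map (A : Type) (F G : A -> nat) (l : seq A) :
  (forall x, List.In x l -> F x = G x) -> sumn (map F l) = sumn (map G l).
Proof.
elim: l => //= x l IHl eqFG; rewrite eqFG; last by left.
by rewrite IHl // => y ly; apply: eqFG; right.
Qed.

Lemma sumn_mapD (A : Type) (F G : A -> nat) (l : seq A) :
  sumn (map (fun x => F x + G x) l) = sumn (map F l) + sumn (map G l).
Proof. by elim: l => //= x l ->; lia. Qed.

Lemma sumn_map0 (A : Type) (F : A -> nat) (l : seq A) :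
  (forall x, F x = 0) -> sumn (map F l) = 0.
Proof. by move=> F0; elim: l => //= x l ->; rewrite F0. Qed.

Lemma NoDup_map_in (A B : Type) (f : A -> B) (l : seq A) : NoDup l ->
  (forall x y, List.In x l -> List.In y l -> f x = f y -> x = y) ->
  NoDup (map f l).
Proof.
move=> uniq_l f_inj; apply: NoDup_map_NoDup_ForallPairs uniq_l => x y lx ly; exact: f_inj.
Qed.

(* [seq.map] and [seq.cat] are not syntactically [List.map] and [List.app], so
   the Stdlib lemmas about them are restated here for rewriting. *)
Lemma In_map_iff (A B : Type) (f : A -> B) (l : seq A) (y : B) :
  List.In y (map f l) <-> exists x, f x = y /\ List.In x l.
Proof. exact: in_map_iff. Qed.

Lemma In_cat_iff (A : Type) (l l' : seq A) (x : A) :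
  List.In x (l ++ l') <-> List.In x l \/ List.In x l'.
Proof. exact: in_app_iff. Qed.

Lemma NoDup_cat (A : Type) (l l' : seq A) : NoDup l -> NoDup l' ->
  (forall x, List.In x l -> ~ List.In x l') -> NoDup (l ++ l').
Proof. exact: NoDup_app. Qed.

(** * Tuples of forests *)

Definition forest_size (f : seq ptree) : nat := sumn (map Defs.tsize f).
Definition forest_leaves (f : seq ptree) : nat := sumn (map nleaves f).
Definition forest_depth (f : seq ptree) : nat := sumn (map leaf_path_total f).

Lemma leaf_depths_Node f : leaf_depths (Node f) =
  if f is [::] then [:: 0] else map S (flatten (map leaf_depths f)).
Proof. by case: f. Qed.

Lemma nleaves_Node f : nleaves (Node f) = forest_leaves f + nilp f.
Proof.
rewrite /nleaves leaf_depths_Node; case: f => // t f.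
by rewrite size_map size_flatten /shape -map_comp addn0.
Qed.

Lemma leaf_path_total_Node f :
  leaf_path_total (Node f) = forest_depth f + forest_leaves f.
Proof.
rewrite /leaf_path_total leaf_depths_Node; case: f => // t f.
have sumn_mapS (l : seq nat) : sumn (map S l) = sumn l + size l.
  by elim: l => //= x l ->; lia.
by rewrite sumn_mapS size_flatten sumn_flatten /shape -!map_comp.
Qed.

Definition stack_size (X : seq (seq ptree)) : nat := sumn (map forest_size X).

Lemma stack_size_cons f X : stack_size (f :: X) = forest_size f + stack_size X.
Proof. by []. Qed.

Lemma forest_size_cons t f : forest_size (t :: f) = Defs.tsize t + forest_size f.
Proof. by []. Qed.

Lemma tsize_Node f : Defs.tsize (Node f) = (forest_size f).+1.
Proof. by []. Qed.

Definition graft (Y : seq (seq ptree)) : seq (seq ptree) :=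
  if Y is f :: g :: X then (Node f :: g) :: X else [::].

Fixpoint stacks (m : nat) : nat -> seq (seq (seq ptree)) :=
  fix stacks_m r :=
    if r is r'.+1 then
      map (cons [::]) (stacks_m r') ++
      (if m is m'.+1 then map graft (stacks m' r'.+2) else [::])
    else if m is 0 then [:: [::]] else [::].

Arguments stacks : simpl never.

Lemma stacksS m r : stacks m r.+1 =
  map (cons [::]) (stacks m r) ++ (if m is m'.+1 then map graft (stacks m' r.+2) else [::]).
Proof. by case: m. Qed.

Lemma stacks0 m : stacks m 0 = if m is 0 then [:: [::]] else [::].
Proof. by case: m. Qed.

Lemma size_mem_stacks m r X : List.In X (stacks m r) -> size X = r.
Proof.
elim: m r X => [|m IHm] r; (elim: r => [|r IHr] X; [rewrite stacks0 | rewrite stacksS]) => //=.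
- by case=> // <-.
- by rewrite cats0 => /In_map_iff [Y [<- /IHr /= ->]].
- move/In_cat_iff => [/In_map_iff [Y [<- /IHr /= ->]] //|].
  by move/In_map_iff => [[|f [|g Y]] [<- /IHm]] //= [->].
Qed.

Lemma stacksP m r X :
  List.In X (stacks m r) <-> size X = r /\ stack_size X = m.
Proof.
elim: m r X => [|m IHm] r; (elim: r => [|r IHr] X; [rewrite stacks0 | rewrite stacksS]) => //=.
- split=> [[<- //|//] | [sX _]]; by case: X sX => // _; left.
- rewrite cats0 In_map_iff; split=> [[Y [<- /IHr [sY zY]]] | [sX]].
    by rewrite /= sY stack_size_cons zY.
  case: X sX => [//|[|[g] f] X /= [sX]]; rewrite stack_size_cons ?forest_size_cons ?tsize_Node //.
  by move=> zX; exists X; split => //; apply/IHr.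
- by split=> [|[sX zX]] //; case: X sX zX.
- rewrite In_cat_iff !In_map_iff; split.
    case=> [[Y [<- /IHr [sY zY]]] | [[|f [|g Y]] [<- /IHm [//= [<-]]]]].
      by rewrite /= sY stack_size_cons zY.
    by rewrite !stack_size_cons forest_size_cons tsize_Node => <-; split => //; lia.
  move=> [sX]; case: X sX => [//|[|[f] g] X /= [sX]].
    by rewrite stack_size_cons => zX; left; exists X; split => //; apply/IHr.
  rewrite stack_size_cons forest_size_cons tsize_Node => zX.
  right; exists [:: f, g & X]; split => //; apply/IHm; split; first by rewrite /= sX.
  by rewrite !stack_size_cons; lia.
Qed.

Lemma stacks_NoDup m r : NoDup (stacks m r).
Proof.
elim: m r => [|m IHm] r; (elim: r => [|r IHr]; [rewrite stacks0 | rewrite stacksS]).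
- by repeat constructor.
- by rewrite cats0; apply: (NoDup_map_in IHr) => x y _ _ [].
- by constructor.
apply: NoDup_cat.
- by apply: (NoDup_map_in IHr) => x y _ _ [].
- apply: (NoDup_map_in (IHm _)) => x y /size_mem_stacks + /size_mem_stacks.
  by case: x => [|f [|g x]] //; case: y => [|f' [|g' y]] //= _ _ [-> -> ->].
- by move=> _ /In_map_iff [X [<- _]] /In_map_iff [[|f [|g Y]] [+ /size_mem_stacks]].
Qed.

Definition plane_trees (k : nat) : seq ptree :=
  map (fun X => Node (nth [::] X 0)) (stacks k 1).

Lemma plane_trees_enum k : enum_trees k.+1 (plane_trees k).
Proof.
have one_forest X : List.In X (stacks k 1) <-> exists2 f, X = [:: f] & forest_size f = k.
  rewrite stacksP; split=> [[] | [f -> <-]]; last by rewrite /stack_size /= addn0.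
  by case: X => [|f [|//]] // _; rewrite /stack_size /= addn0; exists f.
split.
  apply: (NoDup_map_in (stacks_NoDup _ _)).
  by move=> x y /one_forest [f -> _] /one_forest [g -> _] [->].
move=> [f]; rewrite In_map_iff; split=> [[X [<- /one_forest [g -> <-]]] // | [sz]].
by exists [:: f]; split => //; apply/one_forest; exists f.
Qed.

Lemma enum_trees_Permutation n s s' :
  enum_trees n s -> enum_trees n s' -> Permutation s s'.
Proof.
move=> [uniq_s mem_s] [uniq_s' mem_s']; apply: NoDup_Permutation => // t.
by rewrite mem_s mem_s'.
Qed.

(** * Leaf and depth totals *)

(* The totals, over all tuples in [stacks m r], of the number of leaves and of
   the leaf depths in any one fixed component. *)
Definition leaf_sum (m r : nat) : nat :=
  if m is m'.+1 then 'C(m'.*2 + r, m') else 0.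

Definition depth_sum (m r : nat) : nat :=
  if m is m'.+1 then \sum_(0 <= j < m') 'C(m'.*2 + r, j) else 0.

Lemma bin_mid_double m : ('C(m.*2.+1, m)).*2 = 'C(m.*2.+2, m.+1).
Proof.
rewrite binS -addnn; congr (_ + _).
by rewrite -bin_sub; [congr 'C(_, _) | ]; lia.
Qed.

Lemma sum_bin_half m : (\sum_(0 <= j < m.+1) 'C(m.*2.+1, j)).*2 = 2 ^ m.*2.+1.
Proof.
have -> : 2 ^ m.*2.+1 = \sum_(0 <= j < m.*2.+2) 'C(m.*2.+1, j).
  by rewrite -[2]/(1 + 1) expnDn big_mkord; apply: eq_bigr => j _; rewrite !exp1n !muln1.
rewrite [RHS](@big_cat_nat _ _ _ m.+1) //=; last lia.
rewrite -addnn (big_addn 0 _ m.+1) big_nat_rev; congr (_ + _).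
rewrite (_ : m.*2.+2 - m.+1 = m.+1); last lia.
apply: congr_big_nat => // j /andP [_ lt_jm].
by rewrite -bin_sub; [congr 'C(_, _) | ]; lia.
Qed.

Lemma sum_binS a p : \sum_(0 <= j < p.+1) 'C(a.+1, j) =
  \sum_(0 <= j < p.+1) 'C(a, j) + \sum_(0 <= j < p) 'C(a, j).
Proof.
elim: p => [|p IHp]; first by rewrite !big_nat1 big_geq // !bin0.
by rewrite big_nat_recr //= IHp binS (big_nat_recr p.+1) //= !(big_nat_recr p) //=; lia.
Qed.

Lemma leaf_sumS m r : leaf_sum m.+1 r.+1 = leaf_sum m.+1 r + leaf_sum m r.+2.
Proof.
case: m => [|m] /=; first by rewrite !bin0.
by rewrite doubleS addSn addnS binS; congr ('C(_, _) + 'C(_, _)); lia.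
Qed.

Lemma depth_sumS m r : depth_sum m.+1 r.+1 = depth_sum m.+1 r + depth_sum m r.+2.
Proof.
case: m => [|m] /=; first by rewrite !big_geq.
rewrite doubleS addSn addnS sum_binS; congr (_ + _).
by apply: eq_bigr => j _; congr 'C(_, _); lia.
Qed.

Lemma depth_sum_succ m r : depth_sum m.+1 r = (depth_sum m r.+1).*2 + leaf_sum m r.+1.
Proof.
case: m => [|m]; first by rewrite /= big_geq.
rewrite /= (_ : m.+1.*2 + r = (m.*2 + r.+1).+1); last lia.
by rewrite sum_binS big_nat_recr //=; lia.
Qed.

Definition comp_leaves (i : nat) (X : seq (seq ptree)) : nat := forest_leaves (nth [::] X i).
Definition comp_depth (i : nat) (X : seq (seq ptree)) : nat := forest_depth (nth [::] X i).

Lemma sumn_stacksS (h : seq (seq ptree) -> nat) m r :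
  sumn (map h (stacks m r.+1)) =
  sumn (map (fun X => h ([::] :: X)) (stacks m r)) +
  (if m is m'.+1 then sumn (map (fun Y => h (graft Y)) (stacks m' r.+2)) else 0).
Proof. by rewrite stacksS map_cat sumn_cat -map_comp; case: m => //= m; rewrite -map_comp. Qed.

Lemma size_stacks m r : size (stacks m r) + (leaf_sum m r.+1).*2 = leaf_sum m.+1 r.
Proof.
elim: m r => [|m IHm] r; (elim: r => [|r IHr]; [rewrite stacks0 | rewrite stacksS]).
- by [].
- by move: IHr; rewrite cats0 size_map /= !bin0.
- by cbn [leaf_sum]; rewrite add0n addn1 addn0 doubleS bin_mid_double.
rewrite size_cat !size_map leaf_sumS.
have := leaf_sumS m.+1 r; have := leaf_sumS m r.+1; have := IHm r.+2; lia.
Qed.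

Lemma sum_nilp_head_stacks m r :
  sumn (map (fun X => nilp (nth [::] X 0) : nat) (stacks m r.+1)) = size (stacks m r).
Proof.
rewrite sumn_stacksS (_ : sumn _ = size (stacks m r)); last first.
  by elim: (stacks m r) => //= X s ->.
case: m => [|m]; first exact: addn0.
rewrite (@eq_in_sumn_map _ _ (fun=> 0)) ?sumn_map0 ?addn0 // => Y /size_mem_stacks.
by case: Y => [|f [|g Y]].
Qed.

Lemma forest_leaves_cons t f : forest_leaves (t :: f) = nleaves t + forest_leaves f.
Proof. by []. Qed.

Lemma forest_depth_cons t f : forest_depth (t :: f) = leaf_path_total t + forest_depth f.
Proof. by []. Qed.

Lemma comp_leaves_graft f g X :
  comp_leaves 0 (graft [:: f, g & X]) = forest_leaves f + forest_leaves g + nilp f.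
Proof. by rewrite /comp_leaves /= forest_leaves_cons nleaves_Node; lia. Qed.

Lemma comp_depth_graft f g X :
  comp_depth 0 (graft [:: f, g & X]) = forest_depth f + forest_depth g + forest_leaves f.
Proof. by rewrite /comp_depth /= forest_depth_cons leaf_path_total_Node; lia. Qed.

Lemma sum_comp_leaves m r i :
  i < r -> sumn (map (comp_leaves i) (stacks m r)) = leaf_sum m r.
Proof.
elim: m r i => [|m IHm] r i; elim: r i => [|r IHr] [|i] // lt_ir; rewrite sumn_stacksS.
- by rewrite sumn_map0.
- by rewrite addn0; apply: IHr.
- rewrite sumn_map0 // add0n.
  rewrite (@eq_in_sumn_map _ _
    (fun Y => comp_leaves 0 Y + comp_leaves 1 Y + nilp (nth [::] Y 0))); last first.
    by move=> [|f [|g Y]] /size_mem_stacks // _; rewrite comp_leaves_graft.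
  rewrite !sumn_mapD sum_nilp_head_stacks !IHm //.
  have := size_stacks m r.+1; lia.
rewrite (IHr i) // (@eq_in_sumn_map _ _ (comp_leaves i.+2)) ?IHm ?leaf_sumS //.
by move=> [|f [|g Y]] /size_mem_stacks.
Qed.

Lemma sum_comp_depth m r i :
  i < r -> sumn (map (comp_depth i) (stacks m r)) = depth_sum m r.
Proof.
elim: m r i => [|m IHm] r i; elim: r i => [|r IHr] [|i] // lt_ir; rewrite sumn_stacksS.
- by rewrite sumn_map0.
- by rewrite addn0; apply: IHr.
- rewrite sumn_map0 // add0n.
  rewrite (@eq_in_sumn_map _ _
    (fun Y => comp_depth 0 Y + comp_depth 1 Y + comp_leaves 0 Y)); last first.
    by move=> [|f [|g Y]] /size_mem_stacks // _; rewrite comp_depth_graft.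
  by rewrite !sumn_mapD sum_comp_leaves // !IHm // depth_sum_succ addnn.
rewrite (IHr i) // (@eq_in_sumn_map _ _ (comp_depth i.+2)) ?IHm ?depth_sumS //.
by move=> [|f [|g Y]] /size_mem_stacks.
Qed.

Lemma sum_nleaves_plane_trees k :
  sumn (map nleaves (plane_trees k.+1)) = 'C(k.*2.+1, k).
Proof.
rewrite -map_comp (@eq_in_sumn_map _ _ (comp_leaves 0)); last first.
  move=> X /stacksP [].
  case: X => [|[|t f] [|]] // _; rewrite /stack_size /= nleaves_Node /comp_leaves /=.
  by move=> _; rewrite addn0.
by rewrite sum_comp_leaves //= addn1.
Qed.

Lemma sum_leaf_path_total_plane_trees k :
  sumn (map leaf_path_total (plane_trees k.+1)) = 4 ^ k.
Proof.
rewrite -map_comp (@eq_in_sumn_map _ _ (fun X => comp_depth 0 X + comp_leaves 0 X)); last first.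
  by move=> X _; rewrite /= leaf_path_total_Node.
rewrite sumn_mapD sum_comp_depth // sum_comp_leaves //=.
rewrite -(big_nat_recr _ _ _ (leq0n k)) /= addn1.
apply/eqP; rewrite -(eqn_pmul2l (isT : 0 < 2)) mul2n sum_bin_half.
by rewrite expnS -mul2n expnM.
Qed.

(** * Double factorials and Wallis integrals *)

Lemma dfactSS k : dfact k.+2 = k.+2 * dfact k.
Proof. by []. Qed.

Lemma dfact_odd m : dfact m.*2.+1 = m.*2.+1 * dfact m.*2.-1.
Proof. by case: m. Qed.

Lemma dfact_gt0 k : 0 < dfact k.
Proof.
suff : 0 < dfact k /\ 0 < dfact k.+1 by case.
by elim: k => [|k [IHk IHk1]]; split => //; rewrite dfactSS muln_gt0 IHk.
Qed.

Lemma dfact_even m : dfact m.*2 = 2 ^ m * m`!.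
Proof. by elim: m => [|m IHm] //; rewrite doubleS dfactSS IHm expnS factS -mul2n; lia. Qed.

Lemma dfact_mul_succ n : dfact n.+1 * dfact n = n.+1`!.
Proof. by elim: n => [|n IHn] //; rewrite dfactSS factS -IHn; lia. Qed.

(* Times (2k+2)!!, both sides equal 2 4^k (2k+2)!, because (2k+2)!! = 2^(k+1) (k+1)!
   and (2k+2)!! (2k+1)!! = (2k+2)!. *)
Lemma dfact_bin_mid k : dfact k.*2.+2 * 'C(k.*2.+1, k) = 2 * 4 ^ k * dfact k.*2.+1.
Proof.
apply/eqP; rewrite -(eqn_pmul2l (dfact_gt0 k.*2.+2)); apply/eqP.
have -> : dfact k.*2.+2 * (2 * 4 ^ k * dfact k.*2.+1) = 2 * 4 ^ k * (k.*2.+2)`!.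
  by rewrite -dfact_mul_succ; lia.
have := @bin_fact k.*2.+1 k; rewrite (_ : k.*2.+1 - k = k.+1); last lia.
rewrite -doubleS dfact_even factS (factS k.*2.+1) (_ : 4 = 2 ^ 2) // -expnM => <-; last lia.
rewrite expnS (_ : 2 ^ (2 * k) = 2 ^ k * 2 ^ k); first lia.
by rewrite -expnD; congr (2 ^ _); lia.
Qed.

Open Scope R_scope.

Definition wallis (n : nat) : R := RInt (fun x => sin x ^ n) 0 (PI / 2).

Lemma ex_RInt_sin_pow n : ex_RInt (fun x => sin x ^ n) 0 (PI / 2).
Proof.
apply: ex_RInt_continuous => x _; apply: ex_derive_continuous; by auto_derive.
Qed.

(* (sin^(n+1) cos)' = (n+1) sin^n - (n+2) sin^(n+2), integrated over [0, PI/2]. *)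
Lemma wallis_rec n : (INR n + 2) * wallis n.+2 = (INR n + 1) * wallis n.
Proof.
pose g x := (INR n + 1) * sin x ^ n - (INR n + 2) * sin x ^ n.+2.
pose F x := sin x ^ n.+1 * cos x.
have g_int : is_RInt g 0 (PI / 2) (F (PI / 2) - F 0).
  apply: (is_RInt_derive F) => x _; last first.
    by apply: ex_derive_continuous; rewrite /g; auto_derive.
  rewrite /F /g; auto_derive => //.
  have -> : match n with 0%N => 1 | _.+1 => INR n + 1 end = INR n + 1.
    by case: (n) => [|n'] /=; ring.
  have cos2 : cos x * cos x = 1 - sin x * sin x by have := sin2 x; rewrite /Rsqr; lra.
  transitivity ((INR n + 1) * sin x ^ n * (cos x * cos x) - sin x ^ n * (sin x * sin x)).
    by ring.
  by rewrite cos2 /=; ring.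
have : RInt g 0 (PI / 2) = 0.
  by rewrite (is_RInt_unique _ _ _ _ g_int) /F /= cos_PI2 sin_0; ring.
rewrite /wallis /g RInt_minus ?RInt_scal; try apply: ex_RInt_scal; try apply: ex_RInt_sin_pow.
rewrite /minus /plus /opp /scal /= /mult /=; lra.
Qed.

Lemma wallis0 : wallis 0 = PI / 2.
Proof. by rewrite /wallis /= RInt_const /scal /= /mult /=; ring. Qed.

Lemma wallis1 : wallis 1 = 1.
Proof.
have cos_int : is_RInt (fun x => sin x ^ 1) 0 (PI / 2) (- cos (PI / 2) - - cos 0).
  apply: (is_RInt_derive (fun x => - cos x)) => x _; first by auto_derive => //; ring.
  by apply: ex_derive_continuous; auto_derive.
by rewrite /wallis (is_RInt_unique _ _ _ _ cos_int) cos_PI2 cos_0; ring.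
Qed.

Lemma wallis_decr n : wallis n.+1 <= wallis n.
Proof.
have PI2_gt0 : 0 < PI / 2 by have := PI_RGT_0; lra.
apply: RInt_le; try apply: ex_RInt_sin_pow; first lra.
move=> x [x_gt0 x_lt].
have sin_ge0 : 0 <= sin x by apply: sin_ge_0; lra.
have sin_le1 : sin x <= 1 by have := SIN_bound x; lra.
have := pow_le _ n sin_ge0; rewrite /=; nra.
Qed.

Lemma INR_SS k : INR k.+2 = INR k + 2.
Proof. by rewrite !S_INR; ring. Qed.

Lemma wallis_even m : wallis m.*2 * INR (dfact m.*2) = PI / 2 * INR (dfact m.*2.-1).
Proof.
elim: m => [|m IHm]; first by rewrite /= wallis0; ring.
rewrite doubleS (_ : m.*2.+2.-1 = m.*2.+1) // dfactSS dfact_odd !mult_INR INR_SS S_INR.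
rewrite -Rmult_assoc (Rmult_comm _ (_ + 2)) wallis_rec Rmult_assoc IHm; ring.
Qed.

Lemma wallis_odd m : wallis m.*2.+1 * INR (dfact m.*2.+1) = INR (dfact m.*2).
Proof.
elim: m => [|m IHm]; first by rewrite /= wallis1; ring.
rewrite doubleS dfactSS (dfactSS m.*2) !mult_INR !INR_SS -IHm.
by rewrite -Rmult_assoc (Rmult_comm _ (_ + 2)) wallis_rec S_INR; ring.
Qed.

Lemma INR_dfact_gt0 k : 0 < INR (dfact k).
Proof. by apply: lt_0_INR; apply/ltP; exact: dfact_gt0. Qed.

Lemma dfact_sq_upper p :
  INR (dfact p.*2) ^ 2 <= PI / 2 * (2 * INR p + 1) * INR (dfact p.*2.-1) ^ 2.
Proof.
have odd_eq := wallis_odd p; have even_eq := wallis_even p.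
have INR_odd : INR p.*2.+1 = 2 * INR p + 1 by rewrite S_INR -mul2n mult_INR.
rewrite dfact_odd mult_INR INR_odd in odd_eq.
have := INR_dfact_gt0 p.*2; have := INR_dfact_gt0 p.*2.-1; have := pos_INR p.
set X := INR (dfact p.*2) in odd_eq even_eq *.
set Y := INR (dfact p.*2.-1) in odd_eq even_eq *.
move=> p_ge0 Y_gt0 X_gt0.
have XY_ge0 : 0 <= X * ((2 * INR p + 1) * Y).
  by apply: Rmult_le_pos; [|apply: Rmult_le_pos]; lra.
have := Rmult_le_compat_r _ _ _ XY_ge0 (wallis_decr p.*2).
have -> : wallis p.*2.+1 * (X * ((2 * INR p + 1) * Y)) = X ^ 2.
  by rewrite -Rmult_assoc (Rmult_comm _ X) Rmult_assoc odd_eq; ring.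
have -> : wallis p.*2 * (X * ((2 * INR p + 1) * Y)) = PI / 2 * (2 * INR p + 1) * Y ^ 2.
  by rewrite -Rmult_assoc even_eq; ring.
done.
Qed.

Lemma dfact_sq_lower p : (0 < p)%N ->
  PI * INR p * INR (dfact p.*2.-1) ^ 2 <= INR (dfact p.*2) ^ 2.
Proof.
case: p => [//|m _]; rewrite doubleS (_ : m.*2.+2.-1 = m.*2.+1) //.
have even_eq := wallis_even m.+1; have odd_eq := wallis_odd m.
rewrite doubleS (_ : m.*2.+2.-1 = m.*2.+1) // in even_eq.
have X_eq : INR (dfact m.*2.+2) = 2 * INR m.+1 * INR (dfact m.*2).
  by rewrite dfactSS mult_INR -doubleS -mul2n mult_INR.
have := INR_dfact_gt0 m.*2; have := INR_dfact_gt0 m.*2.+1; have := INR_dfact_gt0 m.*2.+2.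
have := lt_0_INR m.+1 (Nat.lt_0_succ m).
set X := INR (dfact m.*2.+2) in even_eq X_eq *.
set Y := INR (dfact m.*2.+1) in even_eq odd_eq *.
set Z := INR (dfact m.*2) in odd_eq X_eq *.
move=> m1_gt0 X_gt0 Y_gt0 Z_gt0.
have XY_ge0 : 0 <= X * Y by apply: Rmult_le_pos; lra.
have := Rmult_le_compat_r _ _ _ XY_ge0 (wallis_decr m.*2.+1).
have -> : wallis m.*2.+2 * (X * Y) = PI / 2 * Y ^ 2.
  by rewrite -Rmult_assoc even_eq; ring.
have -> : wallis m.*2.+1 * (X * Y) = Z * X.
  by rewrite (Rmult_comm X) -Rmult_assoc odd_eq; ring.
rewrite X_eq; nra.
Qed.

Definition dfact_ratio (p : nat) : R := INR (dfact p.*2) / (2 * INR (dfact p.*2.-1)).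

Lemma dfact_ratio_sq_bounds p : (0 < p)%N ->
  PI * INR p <= 4 * dfact_ratio p ^ 2 <= PI * (INR p + 1 / 2).
Proof.
move=> p_gt0; have lower := dfact_sq_lower p_gt0; have upper := dfact_sq_upper p.
have Y_gt0 := INR_dfact_gt0 p.*2.-1.
have ratio_sq : 4 * dfact_ratio p ^ 2 * INR (dfact p.*2.-1) ^ 2 = INR (dfact p.*2) ^ 2.
  by rewrite /dfact_ratio; field; lra.
have Y2_gt0 : 0 < INR (dfact p.*2.-1) ^ 2 by apply: pow_lt.
by split; apply: (Rmult_le_reg_r _ _ _ Y2_gt0); rewrite ratio_sq; lra.
Qed.

Lemma Rabs_sub_le_sq_gap r u c :
  0 <= r -> 0 < u -> r * r <= u * u -> u * u - r * r <= c -> Rabs (r - u) <= c / u.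
Proof.
move=> r_ge0 u_gt0 ru cgap.
have r_le_u : r <= u by nra.
rewrite Rabs_left1; last lra.
apply: (Rmult_le_reg_r u) => //; rewrite /Rdiv Rmult_assoc Rinv_l; nra.
Qed.

Lemma dfact_ratio_asymptotic p : (0 < p)%N ->
  Rabs (dfact_ratio p - sqrt (PI * INR p.+1) / 2) <= PI / sqrt (INR p.+1).
Proof.
move=> /dfact_ratio_sq_bounds [lower upper].
have := PI_RGT_0; have := pos_INR p; rewrite S_INR => PI_gt0 p_ge0.
have rho_ge0 : 0 <= dfact_ratio p.
  by apply: Rmult_le_pos; [apply: pos_INR | apply: Rlt_le; apply: Rinv_0_lt_compat;
     have := INR_dfact_gt0 p.*2.-1; lra].
set s := sqrt (INR p + 1); set q := sqrt PI.
have s_gt0 : 0 < s by apply: sqrt_lt_R0; lra.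
have s_sq : s * s = INR p + 1 by apply: sqrt_sqrt; lra.
have q_sq : q * q = PI by apply: sqrt_sqrt; lra.
have q_ge1 : 1 <= q by rewrite /q -sqrt_1; apply: sqrt_le_1_alt; have := PI2_1; lra.
rewrite sqrt_mult; [|lra|lra]; rewrite -/s -/q.
apply: Rle_trans (Rabs_sub_le_sq_gap (c := PI / 4) _ _ _ _) _ => //; try nra.
have -> : PI / 4 / (q * s / 2) = q / 2 / s by rewrite -q_sq; field; lra.
by apply: Rmult_le_compat_r; [apply: Rlt_le; apply: Rinv_0_lt_compat | ]; nra.
Qed.

Lemma mean_leaf_depth k :
  INR (4 ^ k) / INR 'C(k.*2.+1, k) = dfact_ratio k.+1.
Proof.
have C_gt0 : 0 < INR 'C(k.*2.+1, k) by apply: lt_0_INR; apply/ltP; rewrite bin_gt0; lia.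
rewrite /dfact_ratio doubleS (_ : k.*2.+2.-1 = k.*2.+1) //.
move: (INR_dfact_gt0 k.*2.+1) (dfact_bin_mid k).
move: (dfact k.*2.+1) (dfact k.*2.+2) => d D d_gt0 /(f_equal INR).
rewrite !mult_INR (INR_SS 0) INR_0 Rplus_0_l => bin_mid.
have -> : INR (4 ^ k) = INR D * INR 'C(k.*2.+1, k) / (2 * INR d).
  by rewrite bin_mid; field; lra.
by field; lra.
Qed.

Close Scope R_scope.

Theorem mainTheorem7 :
  (forall (n : nat) (s : seq ptree), 2 <= n -> enum_trees n s ->
     [/\ sumn (map leaf_path_total s) = 4 ^ (n - 2),
         (sumn (map nleaves s)).*2 = 'C(n.*2 - 2, n - 1)
       & Rdiv (INR (sumn (map leaf_path_total s))) (INR (sumn (map nleaves s)))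
         = Rdiv (INR (dfact (n.*2 - 2))) (Rmult 2 (INR (dfact (n.*2 - 3))))])
  /\
  (exists (C : R) (N : nat), forall n : nat, N <= n ->
     Rle (Rabs (Rminus (Rdiv (INR (dfact (n.*2 - 2))) (Rmult 2 (INR (dfact (n.*2 - 3)))))
                       (Rdiv (sqrt (Rmult PI (INR n))) 2)))
         (Rdiv C (sqrt (INR n)))).
Proof.
have double_sub2 k : k.+2.*2 - 2 = k.+1.*2 by rewrite !doubleS; lia.
have double_sub3 k : k.+2.*2 - 3 = k.+1.*2.-1 by rewrite !doubleS; lia.
split=> [[|[|k]] s // _ s_enum | ].
  have perm_s := enum_trees_Permutation s_enum (plane_trees_enum k.+1).
  rewrite (sumn_Permutation _ perm_s) (sumn_Permutation nleaves perm_s).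
  rewrite sum_leaf_path_total_plane_trees sum_nleaves_plane_trees mean_leaf_depth.
  rewrite double_sub2 double_sub3 doubleS bin_mid_double.
  by split => //; congr (4 ^ _); lia.
exists PI, 2%N => -[|[|k]] // _.
rewrite double_sub2 double_sub3.
exact: (dfact_ratio_asymptotic (p := k.+1)).
Qed.
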